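(* Let $\Lambda$ satisfy (RC). There exists a bounded linear operator $I^{\rm h}_2:\dot{\mathscr U}^{1,2}(\Lambda)\to\dot{\mathscr U}^{1,2}(\Lambda^{\rm h})$ and $C>0$ such that $\|DI^{\rm h}_2u\|_{\ell^2_{\mathcal N}(\Lambda^{\rm h})}\le C\|Du\|_{\ell^2_{\mathcal N}(\Lambda)}$ and $I^{\rm h}_2u(\ell)=u(\ell)$ for all $|\ell|>R_{\rm def}$ and all $u\in\dot{\mathscr U}^{1,2}(\Lambda)$. Moreover, there is $c_0\in(0,1]$ such that for every $r>0$ there exists $R\ge r$ with $$\sum_{\ell\in\Lambda^{\rm h}\cap B_r}|DI^{\rm h}_2u(\ell)|_{\mathfrak w,1}\le C\sum_{\ell\in\Lambda\cap B_R}|Du(\ell)|_{\tilde{\mathfrak w},1}$$ for all $\mathfrak w\in\mathscr L_1$ and $u\in\dot{\mathscr U}^{1,2}(\Lambda)$, where $\tilde{\mathfrak w}(t):=\mathfrak w(c_0t)$ (which lies in $\mathscr L_1$).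
   Context: Let $d\in\{2,3\}$, $\mathsf d_s\in\{2,3\}$. $B_R$ is the open ball of radius $R$ at $0$. $A\in\mathbb R^{d\times d}$ nonsingular, $\Lambda^{\rm h}:=A\mathbb Z^d$. A set $\Lambda\subset\mathbb R^d$ satisfies (RC) if there is $R_{\rm def}>0$ with $\Lambda\setminus B_{R_{\rm def}}=\Lambda^{\rm h}\setminus B_{R_{\rm def}}$ and $\Lambda\cap B_{R_{\rm def}}$ finite. For $\Lambda'\in\{\Lambda,\Lambda^{\rm h}\}$ and $\ell\in\Lambda'$: $\Lambda'-\ell:=\{m-\ell:m\in\Lambda'\setminus\{\ell\}\}$; $\mathcal N(\ell)$ is the set of $m\in\Lambda'\setminus\{\ell\}$ for which some $a$ has $|a-\ell|=|a-m|\le|a-k|$ for all $k\in\Lambda'$. For $u:\Lambda'\to\mathbb R^{\mathsf d_s}$: $D_\rho u(\ell):=u(\ell+\rho)-u(\ell)$, $\|Du\|_{\ell^2_{\mathcal N}(\Lambda')}:=(\sum_\ell\sum_{\rho\in\mathcal N(\ell)-\ell}|D_\rho u(\ell)|^2)^{1/2}$, $\dot{\mathscr U}^{1,2}(\Lambda'):=\{u:\|Du\|_{\ell^2_{\mathcal N}(\Lambda')}<\infty\}$. $\mathscr L_1$ is the set of monotonically decreasing $\mathfrak w:[0,\infty)\to(0,\infty)$ with $\|\mathfrak w\|_{L^\infty}+\int_0^\infty r^{d}\mathfrak w(r)dr<\infty$, and $|Du(\ell)|_{\mathfrak w,1}:=\sum_{\rho\in\Lambda'-\ell}\mathfrak w(|\rho|)|D_\rho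 u(\ell)|$. *)

From Stdlib Require Import Reals Lra List ZArith.
Import ListNotations.
Open Scope R_scope.

(* Vectors of R^n: real sequences vanishing from index n on. *)
Definition RV (n : nat) : Type := {x : nat -> R | forall i, (n <= i)%nat -> x i = 0}.
Definition coord {n} (x : RV n) (i : nat) : R := proj1_sig x i.

Definition sumn (n : nat) (f : nat -> R) : R := fold_right Rplus 0 (map f (seq 0 n)).

Definition rnorm {n} (x : RV n) : R := sqrt (sumn n (fun i => coord x i ^ 2)).
Definition rdist {n} (x y : RV n) : R := sqrt (sumn n (fun i => (coord x i - coord y i) ^ 2)).

Definition vlin {n} (a : R) (x : RV n) (b : R) (y : RV n) : RV n.
Proof.
  exists (fun i => a * coord x i + b * coord y i).
  intros i Hi; unfold coord; rewrite (proj2_sig x i Hi), (proj2_sig y i Hi); ring.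
Defined.

Definition nonsingular (d : nat) (A : nat -> nat -> R) : Prop :=
  forall v : RV d, (forall i, (i < d)%nat -> sumn d (fun j => A i j * coord v j) = 0) ->
    forall j, coord v j = 0.

Definition Lh (d : nat) (A : nat -> nat -> R) (x : RV d) : Prop :=
  exists z : nat -> Z, forall i, (i < d)%nat -> coord x i = sumn d (fun j => A i j * IZR (z j)).

Definition RC (d : nat) (A : nat -> nat -> R) (L : RV d -> Prop) (Rdef : R) : Prop :=
  0 < Rdef /\
  (forall x, Rdef <= rnorm x -> (L x <-> Lh d A x)) /\
  (exists l : list (RV d), forall x, L x -> rnorm x < Rdef -> In x l).

(* Voronoi neighbour m of l in the point set L *)
Definition Nb {d} (L : RV d -> Prop) (l m : RV d) : Prop :=
  L m /\ m <> l /\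
  exists a : RV d, rdist a l = rdist a m /\ forall k, L k -> rdist a l <= rdist a k.

(* The (possibly infinite) sum of the nonnegative f over S is <= M. *)
Definition SumLe {X : Type} (S : X -> Prop) (f : X -> R) (M : R) : Prop :=
  forall l : list X, NoDup l -> Forall S l -> fold_right Rplus 0 (map f l) <= M.

(* ||Du||_{l^2_N(L)} <= N  *)
Definition energy_le {d ds} (L : RV d -> Prop) (u : RV d -> RV ds) (N : R) : Prop :=
  SumLe (fun p : RV d * RV d => L (fst p) /\ Nb L (fst p) (snd p))
        (fun p => rdist (u (snd p)) (u (fst p)) ^ 2) (N ^ 2).

Definition inU {d ds} (L : RV d -> Prop) (u : RV d -> RV ds) : Prop :=
  exists N, energy_le L u N.

(* sum_{l in L cap B_r} |Du(l)|_{w,1} <= M *)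
Definition wsum_le {d ds} (L : RV d -> Prop) (r : R) (w : R -> R) (u : RV d -> RV ds) (M : R)
  : Prop :=
  SumLe (fun p : RV d * RV d => L (fst p) /\ rnorm (fst p) < r /\ L (snd p) /\ snd p <> fst p)
        (fun p => w (rdist (snd p) (fst p)) * rdist (u (snd p)) (u (fst p))) M.

(* the class L_1 (w considered on [0, oo)) *)
Definition L1 (d : nat) (w : R -> R) : Prop :=
  (forall s t, 0 <= s <= t -> w t <= w s) /\
  (forall t, 0 <= t -> 0 < w t) /\
  (exists B, forall t, 0 <= t -> Rabs (w t) <= B) /\
  (exists K, forall T (pr : Riemann_integrable (fun r => r ^ d * w r) 0 T),
      0 <= T -> RiemannInt pr <= K).

(* Take [I u := u ∘ proj], where [proj] fixes the points of [Lh] outside the defect ball and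
   sends those inside it to one fixed far lattice point [q0]; then [I u = u] away from the
   defect and [I] is linear.  A Voronoi edge of [Lh] with both ends far is a Voronoi edge of
   [L], except for finitely many edges near the defect.  As [L] is locally finite its Voronoi
   graph is connected (a pair that is not an edge is split by a point closer to both), so each
   of these finitely many increments is a sum of boundedly many [L]-edge increments.
   For the weighted sums, a pair with one end [l] in the core is traded for the [L]-pair with
   [q0] in place of [l]: lattice points are [delta]-separated, so [c0 |m - q0| <= |m - l|] for
   [c0 = delta / (delta + Rdef + |q0|)], and each of the finitely many core points is charged
   with at most one copy of the weighted [L]-sum. *)

From Stdlib Require Import Reals Lra Lia Psatz List ZArith Classical ClassicalEpsilon
  FunctionalExtensionality ProofIrrelevance.
Import ListNotations.
Open Scope R_scope.

Lemma fold_Rplus_init a l : fold_right Rplus a l = fold_right Rplus 0 l + a.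
Proof. induction l as [|x l IH]; simpl; [ring | rewrite IH; ring]. Qed.

Lemma sumn_S n f : sumn (S n) f = sumn n f + f n.
Proof.
  unfold sumn. rewrite seq_S, map_app, fold_right_app. simpl.
  rewrite fold_Rplus_init. ring.
Qed.

Lemma sumn_ext n f g : (forall i, (i < n)%nat -> f i = g i) -> sumn n f = sumn n g.
Proof. induction n; intros H; [reflexivity|]. rewrite !sumn_S, IHn, H; auto. Qed.

Lemma sumn_plus n f g : sumn n (fun i => f i + g i) = sumn n f + sumn n g.
Proof. induction n; [unfold sumn; simpl; ring|]. rewrite !sumn_S, IHn; ring. Qed.

Lemma sumn_scal n c f : sumn n (fun i => c * f i) = c * sumn n f.
Proof. induction n; [unfold sumn; simpl; ring|]. rewrite !sumn_S, IHn; ring. Qed.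

Lemma sumn_minus n f g : sumn n (fun i => f i - g i) = sumn n f - sumn n g.
Proof. induction n; [unfold sumn; simpl; ring|]. rewrite !sumn_S, IHn; ring. Qed.

Lemma sumn_zero n : sumn n (fun _ => 0) = 0.
Proof. induction n; [reflexivity|]. rewrite sumn_S, IHn; ring. Qed.

Lemma sumn_le n f g : (forall i, (i < n)%nat -> f i <= g i) -> sumn n f <= sumn n g.
Proof.
  induction n; intros H; [unfold sumn; simpl; lra|]. rewrite !sumn_S.
  pose proof (H n ltac:(lia)). pose proof (IHn ltac:(auto)). lra.
Qed.

Lemma sumn_nonneg n f : (forall i, (i < n)%nat -> 0 <= f i) -> 0 <= sumn n f.
Proof. intros H. rewrite <- (sumn_zero n). apply sumn_le; auto. Qed.

Lemma sumn_abs n f : Rabs (sumn n f) <= sumn n (fun i => Rabs (f i)).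
Proof.
  induction n; [unfold sumn; simpl; rewrite Rabs_R0; lra|]. rewrite !sumn_S.
  eapply Rle_trans; [apply Rabs_triang | lra].
Qed.

Lemma sumn_term n f j : (forall i, (i < n)%nat -> 0 <= f i) -> (j < n)%nat -> f j <= sumn n f.
Proof.
  induction n; intros H Hj; [lia|]. rewrite sumn_S.
  destruct (Nat.eq_dec j n) as [->|Hne].
  - pose proof (sumn_nonneg n f ltac:(auto)). lra.
  - pose proof (IHn ltac:(auto) ltac:(lia)). pose proof (H n ltac:(lia)). lra.
Qed.

Lemma sumn_swap n m f :
  sumn n (fun i => sumn m (fun j => f i j)) = sumn m (fun j => sumn n (fun i => f i j)).
Proof.
  induction n; [unfold sumn at 1; simpl; now rewrite sumn_zero|].
  rewrite sumn_S, IHn, <- sumn_plus. apply sumn_ext. intros. now rewrite sumn_S.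
Qed.

Definition kron (i k : nat) : R := if Nat.eqb i k then 1 else 0.

Lemma sumn_kron n j g : (j < n)%nat -> sumn n (fun l => kron j l * g l) = g j.
Proof.
  induction n; intros Hj; [lia|]. rewrite sumn_S. unfold kron at 2.
  destruct (Nat.eqb_spec j n) as [->|Hne].
  - rewrite (sumn_ext _ _ (fun _ => 0)), sumn_zero; [ring|].
    intros i Hi. unfold kron. destruct (Nat.eqb_spec n i); [lia | ring].
  - rewrite IHn by lia. ring.
Qed.

Lemma sumn_Cauchy_Schwarz n f g :
  (sumn n (fun i => f i * g i)) ^ 2 <= sumn n (fun i => f i ^ 2) * sumn n (fun i => g i ^ 2).
Proof.
  induction n; [unfold sumn; simpl; lra|]. rewrite !sumn_S.
  set (s := sumn n (fun i => f i * g i)) in *.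
  set (F := sumn n (fun i => f i ^ 2)) in *. set (G := sumn n (fun i => g i ^ 2)) in *.
  set (a := f n). set (b := g n).
  assert (HF : 0 <= F) by (apply sumn_nonneg; intros; nra).
  assert (HG : 0 <= G) by (apply sumn_nonneg; intros; nra).
  (* the cross term: [2 s a b <= F b^2 + G a^2] by AM-GM and the induction hypothesis *)
  assert (Hcross : 2 * s * a * b <= F * b ^ 2 + G * a ^ 2).
  { assert ((2 * s * a * b) ^ 2 <= (F * b ^ 2 + G * a ^ 2) ^ 2).
    { replace ((2 * s * a * b) ^ 2) with (4 * s ^ 2 * (a ^ 2 * b ^ 2)) by ring.
      assert (4 * s ^ 2 * (a ^ 2 * b ^ 2) <= 4 * (F * G) * (a ^ 2 * b ^ 2))
        by (apply Rmult_le_compat_r; nra).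
      pose proof (pow2_ge_0 (F * b ^ 2 - G * a ^ 2)). nra. }
    assert (0 <= F * b ^ 2 + G * a ^ 2) by nra. nra. }
  nra.
Qed.

Lemma sqrt_sumn_sq_le_sumn_abs n f :
  sqrt (sumn n (fun i => f i ^ 2)) <= sumn n (fun i => Rabs (f i)).
Proof.
  assert (Hpos : forall m, 0 <= sumn m (fun i => Rabs (f i)))
    by (intros; apply sumn_nonneg; intros; apply Rabs_pos).
  rewrite <- (sqrt_pow2 _ (Hpos n)). apply sqrt_le_1_alt.
  induction n; [unfold sumn; simpl; lra|]. rewrite !sumn_S.
  pose proof (Hpos n). pose proof (Rabs_pos (f n)).
  rewrite <- (pow2_abs (f n)). nra.
Qed.

Lemma RV_ext n (x y : RV n) : (forall i, coord x i = coord y i) -> x = y.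
Proof.
  destruct x as [x px], y as [y py]; unfold coord; simpl; intros H.
  assert (x = y) as <- by (apply functional_extensionality; auto).
  f_equal. apply proof_irrelevance.
Qed.

Lemma coord_out n (x : RV n) i : (n <= i)%nat -> coord x i = 0.
Proof. exact (proj2_sig x i). Qed.

Definition mkRV (n : nat) (f : nat -> R) : RV n.
Proof.
  exists (fun i => if Nat.ltb i n then f i else 0).
  intros i Hi. destruct (Nat.ltb_spec i n); [lia | reflexivity].
Defined.

Lemma coord_mkRV n f i : (i < n)%nat -> coord (mkRV n f) i = f i.
Proof. intros H. unfold coord, mkRV; simpl. destruct (Nat.ltb_spec i n); [reflexivity | lia]. Qed.

Lemma coord_vlin n a (x : RV n) b y i : coord (vlin a x b y) i = a * coord x i + b * coord y i.
Proof. reflexivity. Qed.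

Definition vzero n : RV n := mkRV n (fun _ => 0).
Definition vsub {n} (x y : RV n) : RV n := vlin 1 x (-1) y.
Definition midpoint {n} (x y : RV n) : RV n := vlin (1/2) x (1/2) y.

Definition dist2 {n} (x y : RV n) : R := sumn n (fun i => (coord x i - coord y i) ^ 2).

Lemma rdist_sqrt_dist2 n (x y : RV n) : rdist x y = sqrt (dist2 x y).
Proof. reflexivity. Qed.

Lemma dist2_ge0 n (x y : RV n) : 0 <= dist2 x y.
Proof. apply sumn_nonneg; intros; apply pow2_ge_0. Qed.

Lemma dist2_sym n (x y : RV n) : dist2 x y = dist2 y x.
Proof. apply sumn_ext; intros; ring. Qed.

Lemma rdist_sym n (x y : RV n) : rdist x y = rdist y x.
Proof. now rewrite !rdist_sqrt_dist2, dist2_sym. Qed.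

Lemma rdist_ge0 n (x y : RV n) : 0 <= rdist x y.
Proof. apply sqrt_pos. Qed.

Lemma rnorm_ge0 n (x : RV n) : 0 <= rnorm x.
Proof. apply sqrt_pos. Qed.

Lemma rdist_refl n (x : RV n) : rdist x x = 0.
Proof.
  unfold rdist. rewrite (sumn_ext _ _ (fun _ => 0)), sumn_zero; [apply sqrt_0|].
  intros; ring.
Qed.

Lemma rnorm_rdist n (x : RV n) : rnorm x = rdist x (vzero n).
Proof.
  unfold rnorm, rdist. f_equal. apply sumn_ext. intros.
  unfold vzero. rewrite coord_mkRV by auto. ring.
Qed.

Lemma rdist_vsub n (x y : RV n) : rdist x y = rnorm (vsub x y).
Proof.
  unfold rnorm, rdist. f_equal. apply sumn_ext. intros. unfold vsub. rewrite coord_vlin. ring.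
Qed.

Lemma dist2_vsub n (x y : RV n) : dist2 x y = dist2 (vsub x y) (vzero n).
Proof.
  apply sumn_ext. intros. unfold vsub, vzero. rewrite coord_vlin, coord_mkRV by auto. ring.
Qed.

Lemma rdist_triangle n (x y z : RV n) : rdist x z <= rdist x y + rdist y z.
Proof.
  rewrite !rdist_sqrt_dist2.
  set (c := fun i => coord x i - coord y i). set (e := fun i => coord y i - coord z i).
  set (p := sqrt (dist2 x y)). set (q := sqrt (dist2 y z)).
  assert (Exz : dist2 x z = dist2 x y + 2 * sumn n (fun i => c i * e i) + dist2 y z).
  { unfold dist2. rewrite <- sumn_scal, <- !sumn_plus. apply sumn_ext; intros. unfold c, e. ring. }
  assert (Hp : p * p = dist2 x y) by (apply sqrt_sqrt, dist2_ge0).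
  assert (Hq : q * q = dist2 y z) by (apply sqrt_sqrt, dist2_ge0).
  assert (0 <= p) by apply sqrt_pos. assert (0 <= q) by apply sqrt_pos.
  assert (Hce : sumn n (fun i => c i * e i) <= p * q).
  { pose proof (sumn_Cauchy_Schwarz n c e) as HCS.
    change (sumn n (fun i => c i ^ 2)) with (dist2 x y) in HCS.
    change (sumn n (fun i => e i ^ 2)) with (dist2 y z) in HCS.
    rewrite <- Hp, <- Hq in HCS.
    set (s := sumn n (fun i => c i * e i)) in *.
    destruct (Rle_lt_dec s (p * q)) as [|Hlt]; [assumption|].
    assert (0 <= p * q) by nra. nra. }
  rewrite <- (sqrt_pow2 (p + q)) by lra. apply sqrt_le_1_alt. nra.
Qed.

Lemma rnorm_triangle n (x y : RV n) : rnorm x <= rnorm y + rdist x y.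
Proof. rewrite !rnorm_rdist. pose proof (rdist_triangle n x y (vzero n)). lra. Qed.

Lemma rdist_le_rnorm_add n (x y : RV n) : rdist x y <= rnorm x + rnorm y.
Proof.
  rewrite !rnorm_rdist, (rdist_sym n y).
  apply rdist_triangle.
Qed.

Lemma Rabs_coord_le_rnorm n (x : RV n) i : (i < n)%nat -> Rabs (coord x i) <= rnorm x.
Proof.
  intros H. unfold rnorm. rewrite <- (sqrt_pow2 (Rabs (coord x i))) by apply Rabs_pos.
  apply sqrt_le_1_alt. rewrite pow2_abs.
  apply (sumn_term n (fun i => coord x i ^ 2)); auto. intros; apply pow2_ge_0.
Qed.

Lemma dist2_parallelogram n (x y k : RV n) :
  dist2 x k + dist2 y k = 2 * dist2 (midpoint x y) k + dist2 x y / 2.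
Proof.
  unfold dist2, Rdiv. rewrite <- !sumn_scal, Rmult_comm, <- sumn_scal, <- !sumn_plus.
  apply sumn_ext. intros. unfold midpoint; rewrite coord_vlin. field.
Qed.

Lemma dist2_midpoint_l n (x y : RV n) : dist2 (midpoint x y) x = dist2 x y / 4.
Proof.
  unfold dist2, Rdiv. rewrite Rmult_comm, <- sumn_scal. apply sumn_ext.
  intros. unfold midpoint; rewrite coord_vlin. field.
Qed.

Lemma dist2_midpoint_r n (x y : RV n) : dist2 (midpoint x y) y = dist2 x y / 4.
Proof.
  unfold dist2, Rdiv. rewrite Rmult_comm, <- sumn_scal. apply sumn_ext.
  intros. unfold midpoint; rewrite coord_vlin. field.
Qed.

Inductive vpath {n} (P : RV n -> Prop) : RV n -> RV n -> nat -> Prop :=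
| vpath_nil x : vpath P x x 0
| vpath_cons x z y k : P x -> Nb P x z -> vpath P z y k -> vpath P x y (S k).

Lemma vpath_app n (P : RV n -> Prop) x y z k m :
  vpath P x y k -> vpath P y z m -> vpath P x z (k + m).
Proof. induction 1; intros Hyz; simpl; auto. eapply vpath_cons; eauto. Qed.

Lemma vpath_rdist_le n ds (P : RV n -> Prop) (u : RV n -> RV ds) N :
  (forall a b, P a -> Nb P a b -> rdist (u b) (u a) <= N) ->
  forall x y k, vpath P x y k -> rdist (u y) (u x) <= INR k * N.
Proof.
  intros HN x y k Hp. induction Hp as [x|x z y k Hx Hxz Hp IH].
  - rewrite rdist_refl. simpl; lra.
  - rewrite S_INR. pose proof (rdist_triangle _ (u y) (u z) (u x)). pose proof (HN x z Hx Hxz). lra.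
Qed.

Lemma Nb_of_midpoint n (P : RV n -> Prop) x y : P y -> x <> y ->
  (forall k, P k -> dist2 (midpoint x y) x <= dist2 (midpoint x y) k) -> Nb P x y.
Proof.
  intros Hy Hne H. split; [auto | split; [auto|]]. exists (midpoint x y). split.
  - now rewrite !rdist_sqrt_dist2, dist2_midpoint_l, dist2_midpoint_r.
  - intros k Hk. rewrite !rdist_sqrt_dist2. apply sqrt_le_1_alt. auto.
Qed.

Definition dist2_locally_finite {n} (P : RV n -> Prop) : Prop :=
  forall D, exists Del : list R,
    forall p q, P p -> P q -> dist2 p q <= D -> In (dist2 p q) Del.

Definition count_below (Del : list R) (s : R) : nat :=
  length (filter (fun r => if Rlt_dec r s then true else false) Del).

Lemma count_below_le Del t s : t <= s -> (count_below Del t <= count_below Del s)%nat.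
Proof.
  intros H. unfold count_below. induction Del as [|a Del IH]; simpl; auto.
  destruct (Rlt_dec a t), (Rlt_dec a s); simpl; try lia. lra.
Qed.

Lemma count_below_lt Del t s : In t Del -> t < s -> (count_below Del t < count_below Del s)%nat.
Proof.
  intros Hin H. induction Del as [|a Del IH]; simpl in *; [contradiction|].
  unfold count_below in *; simpl.
  destruct Hin as [->|Hin].
  - destruct (Rlt_dec t t); [lra|]. destruct (Rlt_dec t s); [|lra]. simpl.
    pose proof (count_below_le Del t s ltac:(lra)). unfold count_below in *. lia.
  - specialize (IH Hin). destruct (Rlt_dec a t), (Rlt_dec a s); simpl; try lia. lra.
Qed.

(* Induction on the number of squared distances below [dist2 x y]: either the midpoint
   certifies that [x], [y] are neighbours, or a point strictly closer to both splits the pair. *)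
Lemma vpath_exists n (P : RV n -> Prop) : dist2_locally_finite P ->
  forall x y, P x -> P y -> exists k, vpath P x y k.
Proof.
  intros Hfin x0 y0 Hx0 Hy0. destruct (Hfin (dist2 x0 y0)) as [Del HDel].
  enough (Hind : forall m x y, P x -> P y -> dist2 x y <= dist2 x0 y0 ->
            count_below Del (dist2 x y) = m -> exists k, vpath P x y k)
    by (eapply Hind; eauto; lra).
  intros m. induction m as [m IH] using (well_founded_induction lt_wf).
  intros x y Hx Hy HD Hc.
  destruct (classic (x = y)) as [<-|Hne]; [exists 0%nat; constructor|].
  destruct (classic (forall k, P k -> dist2 (midpoint x y) x <= dist2 (midpoint x y) k))
    as [Hmid|Hk].
  - exists 1%nat. apply (vpath_cons P x y y 0); [auto | apply Nb_of_midpoint; auto | constructor].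
  - apply not_all_ex_not in Hk. destruct Hk as [k Hk].
    apply imply_to_and in Hk. destruct Hk as [Pk Hk]. apply Rnot_le_lt in Hk.
    pose proof (dist2_parallelogram n x y k). rewrite dist2_midpoint_l in Hk.
    pose proof (dist2_ge0 n x k). pose proof (dist2_ge0 n y k).
    assert (Hxk : dist2 x k < dist2 x y) by lra.
    assert (Hky : dist2 k y < dist2 x y) by (rewrite dist2_sym; lra).
    destruct (IH (count_below Del (dist2 x k))) with (x := x) (y := k) as [k1 Hk1]; auto; [|lra|].
    { rewrite <- Hc. apply count_below_lt; auto. apply HDel; auto; lra. }
    destruct (IH (count_below Del (dist2 k y))) with (x := k) (y := y) as [k2 Hk2]; auto; [|lra|].
    { rewrite <- Hc. apply count_below_lt; auto. apply HDel; auto; lra. }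
    exists (k1 + k2)%nat. eapply vpath_app; eauto.
Qed.

Definition mat_mul_id (d : nat) (X Y : nat -> nat -> R) : Prop :=
  forall i k, (i < d)%nat -> (k < d)%nat -> sumn d (fun j => X i j * Y j k) = kron i k.

Lemma nonsingular_kernel d (A : nat -> nat -> R) : nonsingular d A ->
  forall f : nat -> R, (forall i, (i < d)%nat -> sumn d (fun j => A i j * f j) = 0) ->
  forall j, (j < d)%nat -> f j = 0.
Proof.
  intros HA f Hf j Hj. rewrite <- (coord_mkRV d f j Hj). apply HA. intros i Hi.
  rewrite <- (Hf i Hi). apply sumn_ext. intros; now rewrite coord_mkRV.
Qed.

Ltac unfold_entries := repeat match goal with x := _ : R |- _ => subst x end.
Ltac kernel_check := intros i Hi; destruct i as [|[|[|i]]]; try lia; unfold sumn; simpl;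
  unfold_entries; lra.

(* If [det A = 0], the columns of the adjugate lie in the kernel, which forces [A = 0]. *)
Lemma nonsingular2_inverse A : nonsingular 2 A ->
  exists B, mat_mul_id 2 B A /\ mat_mul_id 2 A B.
Proof.
  intros HA. pose proof (nonsingular_kernel _ A HA) as K.
  set (a := A 0%nat 0%nat) in *. set (b := A 0%nat 1%nat).
  set (c := A 1%nat 0%nat). set (e := A 1%nat 1%nat).
  set (det := a * e - b * c).
  assert (Hdet : det <> 0).
  { intros H0. unfold det in H0.
    pose proof (K (fun j => match j with 0 => e | _ => -c end) ltac:(kernel_check)) as K1.
    pose proof (K (fun j => match j with 0 => -b | _ => a end) ltac:(kernel_check)) as K2.
    pose proof (K1 0%nat ltac:(lia)). pose proof (K1 1%nat ltac:(lia)).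
    pose proof (K2 0%nat ltac:(lia)). pose proof (K2 1%nat ltac:(lia)).
    pose proof (K (fun j => match j with 0 => 1 | _ => 0 end) ltac:(kernel_check) 0%nat
      ltac:(lia)) as E. simpl in *. unfold_entries. lra. }
  exists (fun i j => (match i, j with 0,0 => e | 0,1 => -b | 1,0 => -c | _,_ => a end) / det).
  split; intros i k Hi Hk; destruct i as [|[|i]]; try lia; destruct k as [|[|k]]; try lia;
    unfold sumn, kron; simpl; unfold_entries; field; auto.
Qed.

(* If [det A = 0], the adjugate columns lie in the kernel, so all 2x2 minors vanish; then the
   cross products of the rows of [A] with [e0] and [e1] lie in the kernel as well, which
   forces [A = 0]. *)
Lemma nonsingular3_inverse A : nonsingular 3 A ->
  exists B, mat_mul_id 3 B A /\ mat_mul_id 3 A B.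
Proof.
  intros HA. pose proof (nonsingular_kernel _ A HA) as K.
  set (a00 := A 0%nat 0%nat) in *. set (a01 := A 0%nat 1%nat) in *. set (a02 := A 0%nat 2%nat) in *.
  set (a10 := A 1%nat 0%nat) in *. set (a11 := A 1%nat 1%nat) in *. set (a12 := A 1%nat 2%nat) in *.
  set (a20 := A 2%nat 0%nat) in *. set (a21 := A 2%nat 1%nat) in *. set (a22 := A 2%nat 2%nat) in *.
  set (adj := fun i j => match i, j with
    | 0,0 => a11*a22 - a12*a21 | 0,1 => a02*a21 - a01*a22 | 0,2 => a01*a12 - a02*a11
    | 1,0 => a12*a20 - a10*a22 | 1,1 => a00*a22 - a02*a20 | 1,2 => a02*a10 - a00*a12
    | 2,0 => a10*a21 - a11*a20 | 2,1 => a01*a20 - a00*a21 | _,_ => a00*a11 - a01*a10 end).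
  set (det := a00 * adj 0%nat 0%nat + a01 * adj 1%nat 0%nat + a02 * adj 2%nat 0%nat).
  assert (Hdet : det <> 0).
  { intros H0. unfold det, adj in H0.
    pose proof (K (fun j => adj j 0%nat) ltac:(unfold adj; kernel_check)) as K0.
    pose proof (K (fun j => adj j 1%nat) ltac:(unfold adj; kernel_check)) as K1.
    pose proof (K (fun j => adj j 2%nat) ltac:(unfold adj; kernel_check)) as K2.
    pose proof (K0 0%nat ltac:(lia)). pose proof (K0 1%nat ltac:(lia)). pose proof (K0 2%nat ltac:(lia)).
    pose proof (K1 0%nat ltac:(lia)). pose proof (K1 1%nat ltac:(lia)). pose proof (K1 2%nat ltac:(lia)).
    pose proof (K2 0%nat ltac:(lia)). pose proof (K2 1%nat ltac:(lia)). pose proof (K2 2%nat ltac:(lia)).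
    unfold adj in *; simpl in *. clear K0 K1 K2.
    pose proof (K (fun j => match j with 0 => 0 | 1 => a02 | _ => -a01 end) ltac:(kernel_check)) as L0.
    pose proof (K (fun j => match j with 0 => -a02 | 1 => 0 | _ => a00 end) ltac:(kernel_check)) as L1.
    pose proof (K (fun j => match j with 0 => 0 | 1 => a12 | _ => -a11 end) ltac:(kernel_check)) as L2.
    pose proof (K (fun j => match j with 0 => -a12 | 1 => 0 | _ => a10 end) ltac:(kernel_check)) as L3.
    pose proof (K (fun j => match j with 0 => 0 | 1 => a22 | _ => -a21 end) ltac:(kernel_check)) as L4.
    pose proof (K (fun j => match j with 0 => -a22 | 1 => 0 | _ => a20 end) ltac:(kernel_check)) as L5.
    pose proof (L0 1%nat ltac:(lia)). pose proof (L0 2%nat ltac:(lia)). pose proof (L1 2%nat ltac:(lia)).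
    pose proof (L2 1%nat ltac:(lia)). pose proof (L2 2%nat ltac:(lia)). pose proof (L3 2%nat ltac:(lia)).
    pose proof (L4 1%nat ltac:(lia)). pose proof (L4 2%nat ltac:(lia)). pose proof (L5 2%nat ltac:(lia)).
    simpl in *. clear L0 L1 L2 L3 L4 L5.
    pose proof (K (fun j => match j with 0 => 1 | _ => 0 end) ltac:(kernel_check) 0%nat
      ltac:(lia)) as E. simpl in E. unfold_entries. lra. }
  exists (fun i j => adj i j / det).
  split; intros i k Hi Hk; destruct i as [|[|[|i]]]; try lia; destruct k as [|[|[|k]]]; try lia;
    unfold sumn, kron; simpl; unfold_entries; simpl; field; auto.
Qed.

Lemma nonsingular_inverse d A : (d = 2%nat \/ d = 3%nat) -> nonsingular d A ->
  exists B, mat_mul_id d B A /\ mat_mul_id d A B.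
Proof. intros [-> | ->]; [apply nonsingular2_inverse | apply nonsingular3_inverse]. Qed.

Section Lattice.

Variables (d : nat) (A B : nat -> nat -> R).
Hypotheses (HBA : mat_mul_id d B A) (HAB : mat_mul_id d A B).

Definition lattice_point (z : nat -> Z) : RV d :=
  mkRV d (fun i => sumn d (fun j => A i j * IZR (z j))).

Lemma Lh_lattice_point z : Lh d A (lattice_point z).
Proof. exists z. intros i Hi. unfold lattice_point. now rewrite coord_mkRV. Qed.

Lemma mat_mul_id_apply (X Y : nat -> nat -> R) : mat_mul_id d X Y ->
  forall i v, (i < d)%nat -> sumn d (fun j => X i j * sumn d (fun k => Y j k * v k)) = v i.
Proof.
  intros H i v Hi.
  rewrite (sumn_ext _ _ (fun j => sumn d (fun k => X i j * (Y j k * v k))))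
    by (intros; now rewrite sumn_scal).
  rewrite sumn_swap, (sumn_ext _ _ (fun k => kron i k * v k)); [now apply sumn_kron|].
  intros k Hk. rewrite <- (H i k Hi Hk), Rmult_comm, <- sumn_scal. apply sumn_ext; intros; ring.
Qed.

Definition inv_bound : R := sumn d (fun j => sumn d (fun k => Rabs (B j k))).

Lemma inv_bound_ge0 : 0 <= inv_bound.
Proof. apply sumn_nonneg; intros; apply sumn_nonneg; intros; apply Rabs_pos. Qed.

Lemma Rabs_lattice_coord_le (x : RV d) z :
  (forall i, (i < d)%nat -> coord x i = sumn d (fun j => A i j * IZR (z j))) ->
  forall j, (j < d)%nat -> Rabs (IZR (z j)) <= inv_bound * rnorm x.
Proof.
  intros Hx j Hj.
  assert (Hz : IZR (z j) = sumn d (fun k => B j k * coord x k)).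
  { rewrite (sumn_ext _ _ (fun k => B j k * sumn d (fun l => A k l * IZR (z l))))
      by (intros; now rewrite Hx).
    symmetry. exact (mat_mul_id_apply B A HBA j (fun l => IZR (z l)) Hj). }
  rewrite Hz. eapply Rle_trans; [apply sumn_abs|].
  eapply Rle_trans with (sumn d (fun k => rnorm x * Rabs (B j k))).
  - apply sumn_le. intros k Hk. rewrite Rabs_mult, Rmult_comm.
    apply Rmult_le_compat_r; [apply Rabs_pos | now apply Rabs_coord_le_rnorm].
  - rewrite sumn_scal, Rmult_comm. apply Rmult_le_compat_r; [apply rnorm_ge0|].
    apply (sumn_term d (fun j => sumn d (fun k => Rabs (B j k)))); auto.
    intros; apply sumn_nonneg; intros; apply Rabs_pos.
Qed.

Definition Z_interval (M : Z) : list Z :=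
  map (fun k => (Z.of_nat k - M)%Z) (seq 0 (S (Z.to_nat (2 * M)))).

Lemma in_Z_interval M c : (-M <= c <= M)%Z -> In c (Z_interval M).
Proof.
  intros Hc. apply in_map_iff. exists (Z.to_nat (c + M)).
  split; [rewrite Z2Nat.id by lia; lia | apply in_seq; lia].
Qed.

Fixpoint Z_box (M : Z) (m : nat) : list (nat -> Z) :=
  match m with
  | O => [fun _ => 0%Z]
  | S m' => flat_map (fun z => map (fun c j => if Nat.eqb j m' then c else z j) (Z_interval M))
              (Z_box M m')
  end.

Lemma in_Z_box M m z : (forall j, (j < m)%nat -> (-M <= z j <= M)%Z) ->
  exists z', In z' (Z_box M m) /\ forall j, (j < m)%nat -> z' j = z j.
Proof.
  induction m; intros Hz.
  - exists (fun _ => 0%Z). split; [now left | intros; lia].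
  - destruct IHm as [z1 [Hin Hz1]]; [intros; apply Hz; lia|].
    exists (fun j => if Nat.eqb j m then z m else z1 j). split.
    + apply in_flat_map. exists z1. split; auto. apply in_map_iff. exists (z m).
      split; [reflexivity | apply in_Z_interval, Hz; lia].
    + intros j Hj. destruct (Nat.eqb_spec j m) as [->|]; auto. apply Hz1; lia.
Qed.

Lemma Lh_ball_finite rho : exists l, forall x, Lh d A x -> rnorm x <= rho -> In x l.
Proof.
  set (M := up (inv_bound * Rabs rho)).
  pose proof (archimed (inv_bound * Rabs rho)) as [HM _]. fold M in HM.
  exists (map lattice_point (Z_box M d)). intros x [z Hz] Hr.
  destruct (in_Z_box M d z) as [z' [Hin Hz']].
  { intros j Hj. pose proof (Rabs_lattice_coord_le x z Hz j Hj).
    assert (inv_bound * rnorm x <= inv_bound * Rabs rho).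
    { apply Rmult_le_compat_l; [apply inv_bound_ge0|]. pose proof (Rle_abs rho). lra. }
    assert (Rabs (IZR (z j)) < IZR M) as Hlt by lra.
    rewrite <- abs_IZR in Hlt. apply lt_IZR in Hlt. lia. }
  apply in_map_iff. exists z'. split; auto. apply RV_ext. intros i.
  destruct (Nat.lt_ge_cases i d).
  - unfold lattice_point. rewrite coord_mkRV, Hz by auto. apply sumn_ext. intros; now rewrite Hz'.
  - now rewrite !coord_out.
Qed.

Definition covering_radius : R := sumn d (fun i => sumn d (fun j => Rabs (A i j))).

Lemma covering_radius_ge0 : 0 <= covering_radius.
Proof. apply sumn_nonneg; intros; apply sumn_nonneg; intros; apply Rabs_pos. Qed.

(* Round the coordinates [B a] of [a] to integers [z]; each coordinate of [a - A z] is then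
   [sum_j A i j (y j - z j)] with [|y j - z j| <= 1]. *)
Lemma Lh_covering (a : RV d) : exists x, Lh d A x /\ rdist a x <= covering_radius.
Proof.
  set (y := fun j => sumn d (fun k => B j k * coord a k)).
  set (z := fun j => (up (y j) - 1)%Z).
  assert (Hyz : forall j, Rabs (y j - IZR (z j)) <= 1).
  { intros j. unfold z. rewrite minus_IZR. pose proof (archimed (y j)) as [H1 H2]. simpl.
    unfold Rabs; destruct Rcase_abs; lra. }
  exists (lattice_point z). split; [apply Lh_lattice_point|].
  eapply Rle_trans;
    [apply (sqrt_sumn_sq_le_sumn_abs d (fun i => coord a i - coord (lattice_point z) i))|].
  apply sumn_le. intros i Hi. unfold lattice_point. rewrite coord_mkRV by auto.
  rewrite <- (mat_mul_id_apply A B HAB i (fun k => coord a k) Hi).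
  rewrite <- sumn_minus.
  eapply Rle_trans; [apply sumn_abs|]. apply sumn_le. intros j Hj.
  change (sumn d (fun k => B j k * coord a k)) with (y j).
  replace (A i j * y j - A i j * IZR (z j)) with (A i j * (y j - IZR (z j))) by ring.
  rewrite Rabs_mult. pose proof (Hyz j). pose proof (Rabs_pos (A i j)). nra.
Qed.

Lemma Lh_vsub (p q : RV d) : Lh d A p -> Lh d A q -> Lh d A (vsub p q).
Proof.
  intros [z Hz] [z' Hz']. exists (fun j => (z j - z' j)%Z). intros i Hi.
  unfold vsub; rewrite coord_vlin, Hz, Hz' by auto.
  replace (1 * sumn d (fun j => A i j * IZR (z j)) + -1 * sumn d (fun j => A i j * IZR (z' j)))
    with (sumn d (fun j => A i j * IZR (z j)) - sumn d (fun j => A i j * IZR (z' j))) by ring.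
  rewrite <- sumn_minus. apply sumn_ext; intros; rewrite minus_IZR; ring.
Qed.

Lemma Lh_separated : exists delta, 0 < delta /\
  forall l m : RV d, Lh d A l -> Lh d A m -> m <> l -> delta <= rdist m l.
Proof.
  pose proof inv_bound_ge0.
  exists (1 / (inv_bound + 1)). split; [apply Rdiv_lt_0_compat; lra|].
  intros l m Hl Hm Hne. rewrite rdist_vsub. destruct (Lh_vsub m l Hm Hl) as [z Hz].
  destruct (classic (exists j, (j < d)%nat /\ z j <> 0%Z)) as [[j [Hj Hzj]]|Hall].
  - pose proof (Rabs_lattice_coord_le _ z Hz j Hj).
    assert (1 <= Rabs (IZR (z j))) by (rewrite <- abs_IZR; apply IZR_le; lia).
    pose proof (rnorm_ge0 d (vsub m l)).
    apply (Rmult_le_reg_r (inv_bound + 1)); [lra|].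
    unfold Rdiv. rewrite Rmult_assoc, Rinv_l by lra. nra.
  - exfalso. apply Hne, RV_ext. intros i. destruct (Nat.lt_ge_cases i d) as [Hi|Hi].
    + pose proof (Hz i Hi) as Hzi. unfold vsub in Hzi; rewrite coord_vlin in Hzi.
      rewrite (sumn_ext _ _ (fun _ => 0)), sumn_zero in Hzi; [lra|].
      intros j Hj. destruct (Z.eq_dec (z j) 0) as [->|]; [simpl; ring|].
      exfalso; apply Hall; eauto.
    + now rewrite !coord_out.
Qed.

End Lattice.

Definition lsum {X} (f : X -> R) (l : list X) : R := fold_right Rplus 0 (map f l).

Definition filt {X} (P : X -> Prop) (l : list X) : list X :=
  filter (fun x => if excluded_middle_informative (P x) then true else false) l.

Lemma filt_In {X} (P : X -> Prop) l x : In x (filt P l) <-> In x l /\ P x.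
Proof.
  unfold filt. rewrite filter_In.
  destruct (excluded_middle_informative (P x)); intuition discriminate.
Qed.

Lemma lsum_split {X} (f : X -> R) P l :
  lsum f l = lsum f (filt P l) + lsum f (filt (fun x => ~ P x) l).
Proof.
  induction l as [|a l IH]; unfold lsum, filt in *; simpl; [ring|].
  destruct (excluded_middle_informative (P a)), (excluded_middle_informative (~ P a));
    try tauto; simpl; rewrite IH; ring.
Qed.

Lemma lsum_le {X} (f g : X -> R) l : (forall x, In x l -> f x <= g x) -> lsum f l <= lsum g l.
Proof.
  induction l as [|a l IH]; intros H; unfold lsum in *; simpl; [lra|].
  pose proof (H a (or_introl eq_refl)). pose proof (IH (fun x Hx => H x (or_intror Hx))). lra.
Qed.

Lemma lsum_zero {X} (f : X -> R) l : (forall x, In x l -> f x = 0) -> lsum f l = 0.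
Proof.
  induction l as [|a l IH]; intros H; unfold lsum in *; simpl; [reflexivity|].
  rewrite H, IH; [ring | intros; apply H; now right | now left].
Qed.

Lemma SumLe_ge0 {X} (S : X -> Prop) f M : SumLe S f M -> 0 <= M.
Proof. intros H. exact (H [] (NoDup_nil _) (Forall_nil _)). Qed.

Lemma SumLe_le {X} (S : X -> Prop) f M M' : M <= M' -> SumLe S f M -> SumLe S f M'.
Proof. intros HM H l Hnd Hl. specialize (H l Hnd Hl). lra. Qed.

Lemma lsum_le_SumLe_inj {X Y} (S : Y -> Prop) (f : X -> R) (g : Y -> R) (h : X -> Y) M l :
  NoDup l -> (forall x, In x l -> S (h x)) ->
  (forall x y, In x l -> In y l -> h x = h y -> x = y) ->
  (forall x, In x l -> f x <= g (h x)) -> SumLe S g M -> lsum f l <= M.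
Proof.
  intros Hnd HS Hinj Hf HM. eapply Rle_trans; [apply (lsum_le f (fun x => g (h x))); auto|].
  unfold lsum. rewrite <- map_map. apply HM.
  - apply NoDup_map_NoDup_ForallPairs; auto.
  - apply Forall_forall. intros y Hy. apply in_map_iff in Hy. destruct Hy as [x [<- Hx]]. auto.
Qed.

Lemma lsum_le_by_keys {X K} (key : X -> K) (P : X -> Prop) (f : X -> R) M :
  0 <= M ->
  (forall q ls, NoDup ls -> (forall x, In x ls -> P x) -> (forall x, In x ls -> key x = q) ->
     lsum f ls <= M) ->
  forall Q ls, NoDup ls -> (forall x, In x ls -> P x) -> (forall x, In x ls -> In (key x) Q) ->
  lsum f ls <= INR (length Q) * M.
Proof.
  intros HM Hfib Q. induction Q as [|q Q IH]; intros ls Hnd HP HQ.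
  - destruct ls as [|x ls]; [unfold lsum; simpl; lra|].
    exfalso. apply (HQ x). now left.
  - rewrite (lsum_split f (fun x => key x = q)). simpl length. rewrite S_INR.
    assert (lsum f (filt (fun x => key x = q) ls) <= M).
    { apply (Hfib q); [now apply NoDup_filter| |];
        intros x Hx; apply filt_In in Hx; [apply HP|]; tauto. }
    assert (lsum f (filt (fun x => key x <> q) ls) <= INR (length Q) * M).
    { apply IH; [now apply NoDup_filter| |]; intros x Hx; apply filt_In in Hx;
        [apply HP; tauto|].
      destruct Hx as [Hx Hk]. destruct (HQ x Hx); [congruence | auto]. }
    lra.
Qed.

Lemma NoDup_const {X} (l : list X) q : NoDup l -> (forall x, In x l -> x = q) ->
  l = [] \/ l = [q].
Proof.
  intros Hnd H. destruct l as [|a [|b l]]; auto.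
  - right. now rewrite (H a (or_introl eq_refl)).
  - exfalso. inversion Hnd as [|? ? Hab]. apply Hab.
    rewrite (H a (or_introl eq_refl)), (H b (or_intror (or_introl eq_refl))). now left.
Qed.

Lemma list_exists_bound {X} (P : X -> nat -> Prop) (l : list X) :
  (forall x, In x l -> exists n, P x n) ->
  exists K, forall x, In x l -> exists n, (n <= K)%nat /\ P x n.
Proof.
  induction l as [|a l IH]; intros H; [exists 0%nat; intros x []|].
  destruct IH as [K HK]; [intros; apply H; now right|].
  destruct (H a (or_introl eq_refl)) as [n Hn].
  exists (Nat.max n K). intros x [<-|Hx]; [exists n; split; auto; lia|].
  destruct (HK x Hx) as [m [Hm1 Hm2]]. exists m; split; auto; lia.
Qed.

Lemma div_add_mul_le delta c t s : 0 < delta -> delta <= t -> 0 <= c -> 0 <= s -> s <= t + c ->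
  delta / (delta + c) * s <= t.
Proof.
  intros. apply (Rmult_le_reg_r (delta + c)); [lra|].
  replace (delta / (delta + c) * s * (delta + c)) with (delta * s) by (field; lra). nra.
Qed.

Section Interpolation.

Variables (d ds : nat) (A B : nat -> nat -> R) (L : RV d -> Prop) (Rdef : R) (F : list (RV d)).
Hypotheses (HBA : mat_mul_id d B A) (HAB : mat_mul_id d A B).
Hypothesis L_far : forall x, Rdef <= rnorm x -> (L x <-> Lh d A x).
Hypothesis L_core : forall x, L x -> rnorm x < Rdef -> In x F.

Lemma L_cases p : L p -> (rnorm p < Rdef /\ In p F) \/ Lh d A p.
Proof.
  intros Hp. destruct (Rlt_le_dec (rnorm p) Rdef); [left; split; auto | right; now apply L_far].
Qed.

Lemma Lh_far_L p : Lh d A p -> Rdef <= rnorm p -> L p.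
Proof. intros Hp Hr. now apply L_far. Qed.

(* Squared distances in [L] are either between two points of the finite set [F] ∪ (a ball of
   [Lh]), or squared norms of lattice vectors. *)
Lemma L_dist2_locally_finite : dist2_locally_finite L.
Proof.
  intros D. destruct (Lh_ball_finite d A B HBA (sqrt D)) as [l0 H0].
  destruct (Lh_ball_finite d A B HBA (Rdef + sqrt D)) as [l1 H1].
  set (P := F ++ l1).
  exists (map (fun pq => dist2 (fst pq) (snd pq)) (list_prod P P)
          ++ map (fun v => dist2 v (vzero d)) l0).
  intros p q Hp Hq HD.
  assert (Hr : rdist p q <= sqrt D) by (apply sqrt_le_1_alt; auto).
  assert (Hboth : In p P -> In q P ->
    In (dist2 p q) (map (fun pq => dist2 (fst pq) (snd pq)) (list_prod P P))).
  { intros. apply in_map_iff. exists (p, q). split; auto. now apply in_prod. }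
  assert (HF : forall x, In x F -> In x P) by (intros; apply in_or_app; auto).
  assert (Hl1 : forall x, Lh d A x -> rnorm x <= Rdef + sqrt D -> In x P)
    by (intros; apply in_or_app; auto).
  assert (rnorm p <= rnorm q + sqrt D) by (pose proof (rnorm_triangle d p q); lra).
  assert (rnorm q <= rnorm p + sqrt D)
    by (pose proof (rnorm_triangle d q p); rewrite (rdist_sym d q p) in *; lra).
  apply in_or_app.
  destruct (L_cases p Hp) as [[Hp1 Hp2]|Hp1], (L_cases q Hq) as [[Hq1 Hq2]|Hq1].
  - left. apply Hboth; auto.
  - left. apply Hboth; [auto | apply Hl1; auto; lra].
  - left. apply Hboth; [apply Hl1; auto; lra | auto].
  - right. rewrite (dist2_vsub d p q). apply (in_map (fun v => dist2 v (vzero d))).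
    apply H0; [now apply Lh_vsub | rewrite <- rdist_vsub; auto].
Qed.

Lemma Lh_far_point : (0 < d)%nat -> exists q0, Lh d A q0 /\ Rdef < rnorm q0.
Proof.
  intros Hd. pose proof (covering_radius_ge0 d A).
  set (a := mkRV d (fun i => if Nat.eqb i 0 then Rabs Rdef + covering_radius d A + 1 else 0)).
  destruct (Lh_covering d A B HAB a) as [x [Hx Hax]]. exists x. split; auto.
  assert (Ha : Rabs Rdef + covering_radius d A + 1 <= rnorm a).
  { pose proof (Rabs_coord_le_rnorm d a 0 Hd) as Ha. unfold a in Ha.
    rewrite coord_mkRV in Ha by auto. simpl in Ha.
    rewrite Rabs_right in Ha; [exact Ha|]. pose proof (Rabs_pos Rdef). lra. }
  pose proof (rnorm_triangle d a x). pose proof (Rle_abs Rdef). lra.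
Qed.

Variable q0 : RV d.
Hypotheses (Lh_q0 : Lh d A q0) (q0_far : Rdef < rnorm q0).

Definition proj (x : RV d) : RV d := if Rlt_dec Rdef (rnorm x) then x else q0.

Definition interp (u : RV d -> RV ds) (x : RV d) : RV ds := u (proj x).

Lemma proj_far x : Rdef < rnorm x -> proj x = x.
Proof. intros H. unfold proj. now destruct Rlt_dec. Qed.

Lemma proj_core x : rnorm x <= Rdef -> proj x = q0.
Proof. intros H. unfold proj. destruct Rlt_dec; [lra | reflexivity]. Qed.

Lemma L_q0 : L q0.
Proof. apply Lh_far_L; auto; lra. Qed.

Lemma L_proj x : Lh d A x -> L (proj x).
Proof.
  intros Hx. destruct (Rlt_le_dec Rdef (rnorm x)).
  - rewrite proj_far by auto. apply Lh_far_L; auto; lra.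
  - rewrite proj_core by auto. apply L_q0.
Qed.

Definition far_L_edge (l m : RV d) : Prop := Rdef < rnorm l /\ Rdef < rnorm m /\ Nb L l m.

(* The Voronoi witness [a] of an [Lh]-edge is within [covering_radius] of both ends.  If both
   ends are far and [a] does not witness an [L]-edge, a defect point of [L] is closer to [a]. *)
Lemma Lh_Nb_far_or_bounded l m : Lh d A l -> Nb (Lh d A) l m ->
  far_L_edge l m \/
  (rnorm l <= Rdef + 2 * covering_radius d A /\ rnorm m <= Rdef + 2 * covering_radius d A).
Proof.
  intros Hl [Hm [Hne [a [Heq Hmin]]]].
  set (rho := covering_radius d A).
  destruct (Lh_covering d A B HAB a) as [k [Hk Hak]].
  assert (Hal : rdist a l <= rho) by (specialize (Hmin k Hk); unfold rho; lra).
  assert (rnorm l <= rnorm m + 2 * rho /\ rnorm m <= rnorm l + 2 * rho) as [Hlm Hml].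
  { pose proof (rdist_triangle d l a m). pose proof (rdist_triangle d m a l).
    pose proof (rnorm_triangle d l m). pose proof (rnorm_triangle d m l).
    rewrite (rdist_sym d l a), (rdist_sym d m a) in *. lra. }
  destruct (Rle_lt_dec (rnorm l) Rdef), (Rle_lt_dec (rnorm m) Rdef); try (right; lra).
  destruct (classic (exists k', L k' /\ rdist a k' < rdist a l)) as [[k' [Hk' Hlt]]|Hno].
  - right. destruct (L_cases k' Hk') as [[Hk'1 _]|Hk'1]; [|specialize (Hmin k' Hk'1); lra].
    pose proof (rnorm_triangle d l k'). pose proof (rnorm_triangle d m k').
    pose proof (rdist_triangle d l a k'). pose proof (rdist_triangle d m a k').
    rewrite (rdist_sym d l a), (rdist_sym d m a) in *. lra.
  - left. repeat split; auto; [apply Lh_far_L; auto; lra|].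
    exists a. split; auto. intros k' Hk'. apply Rnot_lt_le. intros Hlt. apply Hno. eauto.
Qed.

Lemma non_far_L_edges_finite : exists Sp : list (RV d * RV d),
  (forall p, In p Sp -> Lh d A (fst p) /\ Lh d A (snd p)) /\
  (forall l m, Lh d A l -> Nb (Lh d A) l m -> ~ far_L_edge l m -> In (l, m) Sp).
Proof.
  destruct (Lh_ball_finite d A B HBA (Rdef + 2 * covering_radius d A)) as [lQ HlQ].
  set (Q := filt (Lh d A) lQ).
  exists (list_prod Q Q). split.
  - intros [l m] Hp. apply in_prod_iff in Hp. destruct Hp as [Hl Hm].
    apply filt_In in Hl, Hm. simpl. tauto.
  - intros l m Hl Hlm Hbad.
    destruct (Lh_Nb_far_or_bounded l m Hl Hlm) as [|[Hl' Hm']]; [contradiction|].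
    pose proof (proj1 Hlm) as Hm.
    apply in_prod; apply filt_In; auto.
Qed.

Lemma energy_le_Nb (u : RV d -> RV ds) N : 0 <= N -> energy_le L u N ->
  forall a b, L a -> Nb L a b -> rdist (u b) (u a) <= N.
Proof.
  intros HN HE a b Ha Hab.
  assert (Hsq : rdist (u b) (u a) ^ 2 <= N ^ 2).
  { pose proof (HE [(a, b)] ltac:(repeat constructor; intros [])
      ltac:(constructor; [split; auto | constructor])) as H.
    simpl in H |- *. lra. }
  pose proof (rdist_ge0 ds (u b) (u a)). nra.
Qed.

Lemma interp_increments_bounded (Sp : list (RV d * RV d)) :
  (forall p, In p Sp -> Lh d A (fst p) /\ Lh d A (snd p)) ->
  exists K, forall u N, 0 <= N -> energy_le L u N ->
    forall p, In p Sp -> rdist (interp u (snd p)) (interp u (fst p)) <= INR K * N.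
Proof.
  intros HSp.
  destruct (list_exists_bound (fun p n => vpath L (proj (fst p)) (proj (snd p)) n) Sp)
    as [K HK].
  { intros p Hp. destruct (HSp p Hp).
    apply vpath_exists; [apply L_dist2_locally_finite | apply L_proj; auto ..]. }
  exists K. intros u N HN HE p Hp. destruct (HK p Hp) as [n [Hn Hpath]].
  pose proof (vpath_rdist_le d ds L u N (energy_le_Nb u N HN HE) _ _ n Hpath).
  assert (INR n * N <= INR K * N) by (apply Rmult_le_compat_r, le_INR; auto).
  unfold interp. lra.
Qed.

Lemma interp_energy_bound : exists C, 0 < C /\
  forall u N, 0 <= N -> energy_le L u N -> energy_le (Lh d A) (interp u) (C * N).
Proof.
  destruct non_far_L_edges_finite as [Sp [HSp Hbad]].
  destruct (interp_increments_bounded Sp HSp) as [K HK].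
  set (C := 1 + INR (length Sp) * INR K ^ 2).
  assert (HC : 1 <= C) by (pose proof (pos_INR (length Sp)); pose proof (pos_INR K); unfold C; nra).
  exists C. split; [lra|]. intros u N HN HE ls Hnd Hls. rewrite Forall_forall in Hls.
  set (f := fun p : RV d * RV d => rdist (interp u (snd p)) (interp u (fst p)) ^ 2).
  change (lsum f ls <= (C * N) ^ 2).
  rewrite (lsum_split f (fun p => far_L_edge (fst p) (snd p))).
  assert (Hfar : lsum f (filt (fun p => far_L_edge (fst p) (snd p)) ls) <= N ^ 2).
  { apply (lsum_le_SumLe_inj (fun p => L (fst p) /\ Nb L (fst p) (snd p)) f
      (fun p => rdist (u (snd p)) (u (fst p)) ^ 2) (fun p => p)); auto;
      [apply NoDup_filter; auto | |];
      intros [l m] Hp; apply filt_In in Hp; destruct Hp as [Hp [Hl [Hm Hlm]]];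
      destruct (Hls _ Hp) as [Hl' _]; simpl in *.
    - split; auto. apply Lh_far_L; auto; lra.
    - unfold f, interp. simpl. rewrite !proj_far by auto. lra. }
  assert (Hnonfar : lsum f (filt (fun p => ~ far_L_edge (fst p) (snd p)) ls)
                    <= INR (length Sp) * (INR K * N) ^ 2).
  { assert (HinSp : forall p, In p (filt (fun p => ~ far_L_edge (fst p) (snd p)) ls) -> In p Sp).
    { intros [l m] Hp. apply filt_In in Hp. destruct Hp as [Hp Hnf].
      destruct (Hls _ Hp). apply Hbad; auto. }
    apply (lsum_le_by_keys (fun p => p) (fun p => In p Sp) f _ (pow2_ge_0 _));
      [|apply NoDup_filter; auto | exact HinSp | exact HinSp].
    intros q ls' Hnd' HP Hq. destruct (NoDup_const ls' q Hnd' Hq) as [-> | ->].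
    { change (lsum f []) with 0. apply pow2_ge_0. }
    change (lsum f [q]) with (f q + 0). rewrite Rplus_0_r.
    apply pow_incr. split; [apply rdist_ge0 | exact (HK u N HN HE q (HP q (or_introl eq_refl)))]. }
  assert (C * N ^ 2 <= (C * N) ^ 2) by (pose proof (pow2_ge_0 N); nra).
  unfold C in *. lra.
Qed.

Hypothesis Rdef_ge0 : 0 <= Rdef.

Section Separation.

Variable delta : R.
Hypothesis delta_pos : 0 < delta.
Hypothesis Lh_sep : forall l m, Lh d A l -> Lh d A m -> m <> l -> delta <= rdist m l.

Definition c0 : R := delta / (delta + (Rdef + rnorm q0)).

Lemma c0_pos_le1 : 0 < c0 <= 1.
Proof.
  pose proof (rnorm_ge0 d q0). unfold c0. split; [apply Rdiv_lt_0_compat; lra|].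
  apply (Rmult_le_reg_r (delta + (Rdef + rnorm q0))); [lra|].
  unfold Rdiv. rewrite Rmult_assoc, Rinv_l by lra. lra.
Qed.

(* [|m - q0| <= |m - l| + Rdef + |q0|] and [|m - l| >= delta]. *)
Lemma c0_rdist_q0_le l m : Lh d A l -> Lh d A m -> m <> l -> rnorm l <= Rdef ->
  c0 * rdist m q0 <= rdist m l.
Proof.
  intros Hl Hm Hne Hlc. pose proof (rnorm_ge0 d q0).
  pose proof (rdist_triangle d m l q0). pose proof (rdist_le_rnorm_add d l q0).
  apply div_add_mul_le; auto; [lra | apply rdist_ge0 | lra].
Qed.

Definition outer_radius (r : R) : R := r + rnorm q0 + 1.

Section Weighted.

Variables (w : R -> R) (u : RV d -> RV ds) (r M : R).
Hypothesis r_pos : 0 < r.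
Hypothesis w_anti : forall s t, 0 <= s <= t -> w t <= w s.
Hypothesis HM : wsum_le L (outer_radius r) (fun t => w (c0 * t)) u M.

Let f (p : RV d * RV d) : R :=
  w (rdist (snd p) (fst p)) * rdist (interp u (snd p)) (interp u (fst p)).
Let g (p : RV d * RV d) : R :=
  w (c0 * rdist (snd p) (fst p)) * rdist (u (snd p)) (u (fst p)).
Let SL (p : RV d * RV d) : Prop :=
  L (fst p) /\ rnorm (fst p) < outer_radius r /\ L (snd p) /\ snd p <> fst p.

Lemma w_mul_le_scaled t s D : 0 <= s -> c0 * s <= t -> 0 <= D -> w t * D <= w (c0 * s) * D.
Proof.
  intros Hs Hst HD. pose proof c0_pos_le1.
  apply Rmult_le_compat_r; auto. apply w_anti. split; [|auto]. apply Rmult_le_pos; lra.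
Qed.

Lemma weighted_far_part ls : NoDup ls ->
  (forall p, In p ls -> Lh d A (fst p) /\ rnorm (fst p) < r /\ Lh d A (snd p) /\ snd p <> fst p /\
     Rdef < rnorm (fst p) /\ Rdef < rnorm (snd p)) ->
  lsum f ls <= M.
Proof.
  intros Hnd Hls. pose proof c0_pos_le1. pose proof (rnorm_ge0 d q0).
  apply (lsum_le_SumLe_inj SL f g (fun p => p)); auto;
    intros p Hp; destruct (Hls p Hp) as [Hl [Hr [Hm [Hne [Hlf Hmf]]]]].
  - repeat split; auto; [apply Lh_far_L | unfold outer_radius | apply Lh_far_L]; auto; lra.
  - unfold f, g, interp. rewrite !proj_far by auto. pose proof (rdist_ge0 d (snd p) (fst p)).
    apply w_mul_le_scaled; [lra | nra | apply rdist_ge0].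
Qed.

Lemma weighted_core_source_part Lcore : (forall x, Lh d A x -> rnorm x <= Rdef -> In x Lcore) ->
  forall ls, NoDup ls ->
  (forall p, In p ls -> Lh d A (fst p) /\ rnorm (fst p) <= Rdef /\ Lh d A (snd p) /\
     Rdef < rnorm (snd p) /\ snd p <> fst p /\ snd p <> q0) ->
  lsum f ls <= INR (length Lcore) * M.
Proof.
  intros Hcore ls Hnd Hls.
  apply (lsum_le_by_keys fst (fun p => In p ls) f M (SumLe_ge0 _ _ _ HM)); auto;
    [|intros p Hp; apply Hcore; apply Hls; auto].
  intros q ls' Hnd' Hin Hq.
  apply (lsum_le_SumLe_inj SL f g (fun p => (q0, snd p))); auto.
  - intros p Hp. destruct (Hls p (Hin p Hp)) as [_ [_ [Hm [Hmf [_ Hmq]]]]].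
    repeat split; simpl; auto; [apply L_q0 | unfold outer_radius; lra | apply Lh_far_L; auto; lra].
  - intros [l m] [l' m'] Hp Hp' Heq.
    pose proof (Hq _ Hp). pose proof (Hq _ Hp'). simpl in *. congruence.
  - intros p Hp. destruct (Hls p (Hin p Hp)) as [Hl [Hlc [Hm [Hmf [Hne _]]]]].
    unfold f, g, interp. simpl. rewrite (proj_far (snd p)), (proj_core (fst p)) by auto.
    apply w_mul_le_scaled; [apply rdist_ge0 | apply c0_rdist_q0_le; auto | apply rdist_ge0].
Qed.

Lemma weighted_core_target_part Lcore : (forall x, Lh d A x -> rnorm x <= Rdef -> In x Lcore) ->
  forall ls, NoDup ls ->
  (forall p, In p ls -> Lh d A (fst p) /\ Rdef < rnorm (fst p) /\ rnorm (fst p) < r /\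
     Lh d A (snd p) /\ rnorm (snd p) <= Rdef /\ snd p <> fst p /\ fst p <> q0) ->
  lsum f ls <= INR (length Lcore) * M.
Proof.
  intros Hcore ls Hnd Hls. pose proof (rnorm_ge0 d q0).
  apply (lsum_le_by_keys snd (fun p => In p ls) f M (SumLe_ge0 _ _ _ HM)); auto;
    [|intros p Hp; apply Hcore; apply Hls; auto].
  intros q ls' Hnd' Hin Hq.
  apply (lsum_le_SumLe_inj SL f g (fun p => (fst p, q0))); auto.
  - intros p Hp. destruct (Hls p (Hin p Hp)) as [Hl [Hlf [Hlr [_ [_ [_ Hlq]]]]]].
    repeat split; simpl; auto; [apply Lh_far_L; auto; lra | unfold outer_radius; lra | apply L_q0].
  - intros [l m] [l' m'] Hp Hp' Heq.
    pose proof (Hq _ Hp). pose proof (Hq _ Hp'). simpl in *. congruence.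
  - intros p Hp. destruct (Hls p (Hin p Hp)) as [Hl [Hlf [_ [Hm [Hmc [Hne _]]]]]].
    unfold f, g, interp. simpl. rewrite (proj_far (fst p)), (proj_core (snd p)) by auto.
    apply w_mul_le_scaled; [apply rdist_ge0 | | apply rdist_ge0].
    rewrite (rdist_sym d q0), (rdist_sym d (snd p)). apply c0_rdist_q0_le; auto.
Qed.

(* Split the pairs into: both ends far; same image under [proj] (no contribution); exactly
   one end in the core. *)
Lemma weighted_interp_bound Lcore : (forall x, Lh d A x -> rnorm x <= Rdef -> In x Lcore) ->
  wsum_le (Lh d A) r w (interp u) ((1 + 2 * INR (length Lcore)) * M).
Proof.
  intros Hcore ls Hnd Hls. rewrite Forall_forall in Hls.
  change (lsum f ls <= (1 + 2 * INR (length Lcore)) * M).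
  set (far := fun p : RV d * RV d => Rdef < rnorm (fst p) /\ Rdef < rnorm (snd p)).
  set (same := fun p : RV d * RV d => proj (fst p) = proj (snd p)).
  set (ls1 := filt (fun p => ~ far p) ls).
  set (ls2 := filt (fun p => ~ same p) ls1).
  rewrite (lsum_split f far). fold ls1.
  rewrite (lsum_split f same ls1). fold ls2.
  rewrite (lsum_split f (fun p => Rdef < rnorm (snd p)) ls2).
  assert (Hls2 : forall p, In p ls2 -> In p ls /\ ~ far p /\ ~ same p).
  { intros p Hp. apply filt_In in Hp as [Hp Hs]. apply filt_In in Hp. tauto. }
  assert (Hnd2 : NoDup ls2) by (repeat apply NoDup_filter; auto).
  assert (Hfar : lsum f (filt far ls) <= M).
  { apply weighted_far_part; [apply NoDup_filter; auto|].
    intros p Hp. apply filt_In in Hp as [Hp Hf]. destruct (Hls p Hp) as [? [? [? ?]]].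
    destruct Hf. tauto. }
  assert (Hsame : lsum f (filt same ls1) = 0).
  { apply lsum_zero. intros p Hp. apply filt_In in Hp as [_ Hp].
    unfold f, interp. rewrite Hp, rdist_refl. ring. }
  assert (Hsrc : lsum f (filt (fun p => Rdef < rnorm (snd p)) ls2) <= INR (length Lcore) * M).
  { apply (weighted_core_source_part Lcore Hcore); [apply NoDup_filter; auto|].
    intros p Hp. apply filt_In in Hp as [Hp Hmf]. destruct (Hls2 p Hp) as [Hp0 [Hnf Hns]].
    destruct (Hls p Hp0) as [Hl [_ [Hm Hne]]].
    assert (Hlc : rnorm (fst p) <= Rdef) by (apply Rnot_lt_le; intros ?; apply Hnf; split; auto).
    repeat split; auto.
    intros Hmq. apply Hns. unfold same. now rewrite proj_core, proj_far. }
  assert (Htgt : lsum f (filt (fun p => ~ Rdef < rnorm (snd p)) ls2) <= INR (length Lcore) * M).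
  { apply (weighted_core_target_part Lcore Hcore); [apply NoDup_filter; auto|].
    intros p Hp. apply filt_In in Hp as [Hp Hmc]. apply Rnot_lt_le in Hmc.
    destruct (Hls2 p Hp) as [Hp0 [Hnf Hns]]. destruct (Hls p Hp0) as [Hl [Hlr [Hm Hne]]].
    assert (Hlf : Rdef < rnorm (fst p)).
    { apply Rnot_le_lt. intros Hlc. apply Hns. unfold same. now rewrite !proj_core. }
    repeat split; auto.
    intros Hlq. apply Hns. unfold same. now rewrite proj_far, proj_core. }
  lra.
Qed.

End Weighted.
End Separation.

Lemma interp_weighted_bound : exists C c, 0 < C /\ 0 < c <= 1 /\
  forall r, 0 < r -> exists R, r <= R /\
    forall w, (forall s t, 0 <= s <= t -> w t <= w s) -> forall u M,
      wsum_le L R (fun t => w (c * t)) u M -> wsum_le (Lh d A) r w (interp u) (C * M).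
Proof.
  destruct (Lh_separated d A B HBA) as [delta [Hdelta Hsep]].
  destruct (Lh_ball_finite d A B HBA Rdef) as [Lcore Hcore].
  exists (1 + 2 * INR (length Lcore)), (c0 delta).
  split; [pose proof (pos_INR (length Lcore)); lra|].
  split; [now apply c0_pos_le1|].
  intros r Hr. exists (outer_radius r).
  split; [pose proof (rnorm_ge0 d q0); unfold outer_radius; lra|].
  intros w Hw u M HM. exact (weighted_interp_bound delta Hdelta Hsep w u r M Hr Hw HM Lcore Hcore).
Qed.

End Interpolation.

Lemma energy_le_Rabs {d ds} (L : RV d -> Prop) (u : RV d -> RV ds) N :
  energy_le L u N -> energy_le L u (Rabs N).
Proof. unfold energy_le. now rewrite <- pow2_abs. Qed.

Theorem mainTheorem18 (d ds : nat) (Hd : d = 2%nat \/ d = 3%nat) (Hds : ds = 2%nat \/ ds = 3%nat)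
  (A : nat -> nat -> R) (HA : nonsingular d A)
  (L : RV d -> Prop) (Rdef : R) (HRC : RC d A L Rdef) :
  exists (I : (RV d -> RV ds) -> (RV d -> RV ds)) (C : R), 0 < C /\
    (forall u v, (forall l, L l -> u l = v l) -> forall l, Lh d A l -> I u l = I v l) /\
    (forall u v a b, inU L u -> inU L v -> forall l, Lh d A l ->
        I (fun x => vlin a (u x) b (v x)) l = vlin a (I u l) b (I v l)) /\
    (forall u, inU L u -> inU (Lh d A) (I u)) /\
    (forall u N, inU L u -> 0 <= N -> energy_le L u N -> energy_le (Lh d A) (I u) (C * N)) /\
    (forall u, inU L u -> forall l, Lh d A l -> Rdef < rnorm l -> I u l = u l) /\
    (exists c0, 0 < c0 <= 1 /\
      forall r, 0 < r -> exists R, r <= R /\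
        forall w, L1 d w -> forall u, inU L u -> forall M,
          wsum_le L R (fun t => w (c0 * t)) u M ->
          wsum_le (Lh d A) r w (I u) (C * M)).
Proof.
  destruct HRC as [HR0 [Hfar [F HF]]].
  destruct (nonsingular_inverse d A Hd HA) as [B [HBA HAB]].
  destruct (Lh_far_point d A B Rdef HAB ltac:(lia)) as [q0 [Hq0 Hq0far]].
  destruct (interp_energy_bound d ds A B L Rdef F HBA HAB Hfar HF q0 Hq0 Hq0far)
    as [C1 [HC1 Henergy]].
  destruct (interp_weighted_bound d ds A B L Rdef HBA Hfar q0 Hq0 Hq0far ltac:(lra))
    as [C2 [c0 [HC2 [Hc0 Hweighted]]]].
  exists (interp d ds Rdef q0), (C1 + C2).
  assert (Henergy' : forall u N, 0 <= N -> energy_le L u N ->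
            energy_le (Lh d A) (interp d ds Rdef q0 u) ((C1 + C2) * N)).
  { intros u N HN HE. apply (SumLe_le _ _ ((C1 * N) ^ 2)); [|now apply Henergy].
    apply pow_incr. split; nra. }
  split; [lra|]. split; [|split; [|split; [|split; [|split]]]].
  - intros u v Huv l Hl. apply Huv. exact (L_proj d A L Rdef Hfar q0 Hq0 Hq0far l Hl).
  - reflexivity.
  - intros u [N HN]. exists ((C1 + C2) * Rabs N). apply Henergy'; [apply Rabs_pos|].
    now apply energy_le_Rabs.
  - intros u N _ HN HE. now apply Henergy'.
  - intros u _ l _ Hl. unfold interp. now rewrite proj_far.
  - exists c0. split; [exact Hc0|]. intros r Hr. destruct (Hweighted r Hr) as [R [HrR HR]].
    exists R. split; [exact HrR|]. intros w [Hw _] u _ M HM.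
    apply (SumLe_le _ _ (C2 * M)); [|now apply HR].
    pose proof (SumLe_ge0 _ _ _ HM). nra.
Qed.
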